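(* Let $L$ be a CW-complex (not necessarily quasi-finite) with the soft map property. Then every $L$-connected pair $V\subset U$ of metrizable spaces admits an $L$-extension.
   Context: All spaces are metrizable and maps continuous. For spaces $X,Y$, $A\subset X$, $g\colon A\to Y$: $Y\in ANE(g,A,X)$ means $g$ extends continuously to a neighborhood $U$ of $A$ for which there is a continuous $h\colon X\to[0,1]$ with $h^{-1}((0,1])=U$, $h(A)=\{1\}$; $Y\in AE(g,A,X)$ means the same with $U=X$. For a CW-complex $L$, $\mathrm{e\text{-}dim}\,X\leq L$ means $L\in AE(g,A,X)$ for every closed $A\subset X$ and every $g\colon A\to L$ with $L\in ANE(g,A,X)$. A pair $V\subset U$ is $L$-connected if for every metrizable $Z$ with $\mathrm{e\text{-}dim}\,Z\leq L$, every closed $A\subset Z$ and every map $g\colon A\to V$, $g$ extends to a map $Z\to U$. A space $X$ is an $AE(L)$ if for every metrizable $Z$ with $\mathrm{e\text{-}dim}\,Z\leq L$ and closed $A\subset Z$, every map $A\to X$ extends over $Z$. A map $f\colon X\to Y$ is $L$-soft if for any metrizable $Z$ with $\mathrm{e\text{-}dim}\,Z\leq L$, any closed $A\subset Z$ and any maps $h\colon Z\to Y$, $g\colon A\to X$ with $f\circ g=h|A$, there is $\bar g\colon Z\to X$ extending $g$ with $f\circ\bar g=h$. $L$ has the soft map property if for every metrizable space $X$ there is a metrizable space $Y$ with $\mathrm{e\text{-}dim}\,Y\leq L$ and an $L$-soft map from $Y$ onto $X$. A pair of spaces $\tilde V\subset\tilde U$ is an $L$-extension of the pair $V\subset U$ if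 $\tilde U\in AE(L)$ and there is a map $q\colon\tilde U\to U$ such that $q|\tilde V$ is an $L$-soft map of $\tilde V$ onto $V$. *)

From HB Require Import structures.
From mathcomp Require Import all_boot all_order all_algebra.
From mathcomp Require Import all_classical all_reals all_analysis.
From mathcomp Require Import Rstruct Rstruct_topology.
From Stdlib Require Import Reals.

Set Implicit Arguments.
Unset Strict Implicit.
Unset Printing Implicit Defensive.
Import Order.TTheory GRing.Theory Num.Theory.
Local Open Scope classical_set_scope.
Local Open Scope ring_scope.

(* Subsets A : set X are regarded as spaces via the sigma type [set_type A]
   carrying the subspace (initial) topology of the inclusion. *)

Definition metrizable (T : topologicalType) : Prop :=
  exists d : T -> T -> Rdefinitions.R,
    (forall x y, 0 <= d x y) /\
    (forall x y, d x y = 0 <-> x = y) /\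
    (forall x y, d x y = d y x) /\
    (forall x y z, d x z <= d x y + d y z) /\
    (forall A : set T, open A <->
       (forall x, A x -> exists2 e : Rdefinitions.R, 0 < e &
          forall y, d x y < e -> A y)).

Definition sqnorm (n : nat) (v : 'rV[Rdefinitions.R]_n) : Rdefinitions.R :=
  \sum_(i < n) (v ord0 i) ^+ 2.
Definition cdisk (n : nat) : set 'rV[Rdefinitions.R]_n := [set v | sqnorm v <= 1].
Definition odisk (n : nat) : set 'rV[Rdefinitions.R]_n := [set v | sqnorm v < 1].
Definition sphere (n : nat) : set 'rV[Rdefinitions.R]_n := [set v | sqnorm v = 1].
Arguments cdisk n : clear implicits.
Arguments odisk n : clear implicits.
Arguments sphere n : clear implicits.

(** CW-complex (Whitehead): a Hausdorff space with a family of cells given by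
    characteristic maps Phi_i : D^(d i) -> X such that
    - each Phi_i is continuous on the closed disk;
    - Phi_i restricted to the open disk is a homeomorphism onto the cell
      e_i = Phi_i(open disk) (injective, and relatively open sets go to
      relatively open sets);
    - the cells partition X;
    - closure finiteness: Phi_i(sphere) lies in finitely many cells of
      dimension < d i;
    - weak topology: A is closed iff A meets each closed cell Phi_i(D) in a
      relatively closed set. *)
Definition is_CW_complex (X : topologicalType) : Prop :=
  hausdorff_space X /\
  exists (I : Type) (d : I -> nat) (Phi : forall i : I, 'rV[Rdefinitions.R]_(d i) -> X),
    let cell := fun i => Phi i @` odisk (d i) in
    (forall i, {within cdisk (d i), continuous (Phi i)}) /\
    (forall i u v, odisk (d i) u -> odisk (d i) v -> Phi i u = Phi i v -> u = v) /\
    (forall i (W : set 'rV[Rdefinitions.R]_(d i)), open W ->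
       exists O : set X, open O /\ Phi i @` (W `&` odisk (d i)) = O `&` cell i) /\
    (forall x : X, exists! i, cell i x) /\
    (forall i : I, exists F : set I, finite_set F /\ (forall j, F j -> leq (d j).+1 (d i)) /\
        Phi i @` sphere (d i) `<=` \bigcup_(j in F) cell j) /\
    (forall A : set X,
       (forall i, exists C : set X, closed C /\
           A `&` (Phi i @` cdisk (d i)) = C `&` (Phi i @` cdisk (d i))) ->
       closed A).

Definition ANE_for (Y X : topologicalType) (A : set X) (g : set_type A -> Y) : Prop :=
  exists (h : X -> Rdefinitions.R) (G : set_type [set x | 0 < h x] -> Y),
    continuous h /\ (forall x, 0 <= h x <= 1) /\
    (forall a : set_type A, h (\val a) = 1) /\
    continuous G /\
    (forall (x : set_type [set x | 0 < h x]) (a : set_type A),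
        \val x = \val a -> G x = g a).

Definition AE_for (Y X : topologicalType) (A : set X) (g : set_type A -> Y) : Prop :=
  exists G : X -> Y, continuous G /\ (forall a : set_type A, G (\val a) = g a).

Definition edim_le (X L : topologicalType) : Prop :=
  forall (A : set X), closed A -> forall g : set_type A -> L, continuous g ->
    ANE_for g -> AE_for g.

Definition L_connected (L U : topologicalType) (V : set U) : Prop :=
  forall Z : topologicalType, metrizable Z -> edim_le Z L ->
  forall A : set Z, closed A -> forall g : set_type A -> set_type V, continuous g ->
  exists G : Z -> U, continuous G /\ (forall a : set_type A, G (\val a) = \val (g a)).

Definition AE_L (L X : topologicalType) : Prop :=
  forall Z : topologicalType, metrizable Z -> edim_le Z L ->
  forall A : set Z, closed A -> forall g : set_type A -> X, continuous g ->
  exists G : Z -> X, continuous G /\ (forall a : set_type A, G (\val a) = g a).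

Definition L_soft (L X Y : topologicalType) (f : X -> Y) : Prop :=
  forall Z : topologicalType, metrizable Z -> edim_le Z L ->
  forall A : set Z, closed A -> forall (h : Z -> Y) (g : set_type A -> X),
    continuous h -> continuous g -> (forall a : set_type A, f (g a) = h (\val a)) ->
  exists gb : Z -> X, continuous gb /\ (forall a : set_type A, gb (\val a) = g a) /\
    (forall z, f (gb z) = h z).

Definition soft_map_property (L : topologicalType) : Prop :=
  forall X : topologicalType, metrizable X ->
  exists (Y : topologicalType) (f : Y -> X),
    metrizable Y /\ edim_le Y L /\ continuous f /\ (forall x, exists y, f y = x) /\ L_soft L f.

Definition L_extension (L U : topologicalType) (V : set U) : Prop :=
  exists (Ut : topologicalType) (Vt : set Ut) (q : Ut -> U),
    metrizable Ut /\ AE_L L Ut /\ continuous q /\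
    exists qV : set_type Vt -> set_type V,
      (forall x : set_type Vt, \val (qV x) = q (\val x)) /\
      (forall v, exists x, qV x = v) /\ L_soft L qV.

From HB Require Import structures.
From mathcomp Require Import all_boot all_order all_algebra.
From mathcomp Require Import all_classical all_reals all_analysis.
From mathcomp Require Import Rstruct Rstruct_topology.
From mathcomp Require Import ring lra.

(* Fix a metric d on U and send v in V to its profile, the function
   o |-> 1 + min (d v o) 1 on V, extended by 1 at an extra coordinate.  In the
   hull H made of the profiles and of the [1,2]-valued functions on V + 1 that
   exceed 1 at the extra coordinate, with the sup metric, the profiles form a
   closed copy of V, although V need not be complete.  H is an absolute
   extensor for metrizable spaces: a map from a closed set A is extended by a
   Dugundji-type inf-convolution whose extra coordinate is raised above 1 off A.
   Hence an L-soft map p from a metrizable Y with e-dim Y <= L onto H makes Y an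
   AE(L), and over the copy of V it restricts to an L-soft map of the closed set
   Vt = p^-1(V) onto V.  Finally L-connectedness of (U, V) extends Vt -> V to a
   map q : Y -> U. *)

Set Implicit Arguments.
Unset Strict Implicit.
Unset Printing Implicit Defensive.
Import Order.TTheory GRing.Theory Num.Theory.
Local Open Scope classical_set_scope.
Local Open Scope ring_scope.
Local Notation R := Rdefinitions.R.

Section RangeBounds.
Variables (I : Type) (F : I -> R).

Lemma le_sup_range M : (forall i, F i <= M) -> forall i, F i <= sup (range F).
Proof.
move=> FM i; apply: sup_upper_bound; last by exists i.
by split; [exists (F i), i | exists M => _ [j _ <-]].
Qed.

Lemma sup_range_le c (i0 : I) : (forall i, F i <= c) -> sup (range F) <= c.
Proof. by move=> Fc; apply: ge_sup; [exists (F i0), i0 | move=> _ [j _ <-]]. Qed.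

Lemma le_inf_range c (i0 : I) : (forall i, c <= F i) -> c <= inf (range F).
Proof. by move=> cF; apply: lb_le_inf; [exists (F i0), i0 | move=> _ [j _ <-]]. Qed.

Variables (m : R) (mF : forall i, m <= F i).

Lemma inf_range_le i : inf (range F) <= F i.
Proof. by apply: ge_inf; [exists m => _ [j _ <-] | exists i]. Qed.

Lemma inf_range_adherent (i0 : I) e : 0 < e -> exists i, F i < inf (range F) + e.
Proof.
move=> e0; have [|_ [i _ <-] Fi] := @inf_adherent _ (range F) e e0; last by exists i.
by split; [exists (F i0), i0 | exists m => _ [j _ <-]].
Qed.

End RangeBounds.

Lemma inf_range_lip (I : Type) (F G : I -> R) m c (i0 : I) :
  (forall i, m <= F i) -> (forall i, m <= G i) -> (forall i, `|F i - G i| <= c) ->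
  `|inf (range F) - inf (range G)| <= c.
Proof.
move=> mF mG FG; have FG' i : F i - c <= G i /\ G i - c <= F i.
  by move: (FG i); rewrite ler_norml => /andP[? ?]; split; lra.
have lFG : inf (range F) - c <= inf (range G).
  apply: (le_inf_range i0) => i; have := inf_range_le mF i; have [? _] := FG' i; lra.
have lGF : inf (range G) - c <= inf (range F).
  apply: (le_inf_range i0) => i; have := inf_range_le mG i; have [_ ?] := FG' i; lra.
by rewrite ler_norml; apply/andP; split; lra.
Qed.

Lemma ler_dist_min (a b c d u : R) : `|a - c| <= u -> `|b - d| <= u ->
  `|Num.min a b - Num.min c d| <= u.
Proof.
rewrite !ler_norml => /andP[? ?] /andP[? ?].
by have [?|?] := leP a b; have [?|?] := leP c d; apply/andP; split; lra.
Qed.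

Lemma ler_dist_max (a b c d u : R) : `|a - c| <= u -> `|b - d| <= u ->
  `|Num.max a b - Num.max c d| <= u.
Proof.
rewrite !ler_norml => /andP[? ?] /andP[? ?].
by have [?|?] := leP a b; have [?|?] := leP c d; apply/andP; split; lra.
Qed.

Lemma ler_dist_min1 (a b : R) : `|Num.min a 1 - Num.min b 1| <= `|a - b|.
Proof. by apply: ler_dist_min; rewrite // subrr normr0. Qed.

Lemma min1_bound (a : R) : 0 <= a -> 0 <= Num.min a 1 <= 1.
Proof. by move=> a0; rewrite le_min a0 ler01 ge_min lexx orbT. Qed.

Lemma ler_dist_min_ratio (x y s t e : R) : 0 < s -> 0 < t -> 0 <= y ->
  `|x - y| <= e -> `|s - t| <= e ->
  `|Num.min x (2 * s) / s - Num.min y (2 * t) / t| <= 4 * e / s.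
Proof.
move=> s0 t0 y0 hxy hst.
set x' := Num.min x (2 * s); set y' := Num.min y (2 * t).
have hxy' : `|x' - y'| <= 2 * e.
  have e0 : 0 <= e by exact: le_trans (normr_ge0 _) hxy.
  apply: ler_dist_min; first by apply: le_trans hxy _; lra.
  by rewrite -mulrBr normrM ger0_norm ?ler_pM2l //; lra.
have /andP[w0 w2] : 0 <= y' / t <= 2.
  rewrite divr_ge0 ?le_min ?y0 /=; try lra.
  by rewrite ler_pdivrMr // ge_min lexx orbT.
(* Since [y' / t] lies in [[0, 2]], both summands are at most [2 * e]. *)
have -> : x' / s - y' / t = ((x' - y') + (y' / t) * (t - s)) / s.
  by field; apply/andP; split; rewrite gt_eqF.
have s'0 : 0 < s^-1 by rewrite invr_gt0.
rewrite normrM (gtr0_norm s'0) ler_pM2r //.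
move: w0 w2 hxy' hst; set w := y' / t => w0 w2; rewrite !ler_norml.
move=> /andP[? ?] /andP[? ?]; clearbody w x' y'.
have ? : 0 <= w * (e - (t - s)) by apply: mulr_ge0; lra.
have ? : 0 <= w * (e + (t - s)) by apply: mulr_ge0; lra.
have ? : 0 <= (2 - w) * e by apply: mulr_ge0; lra.
by apply/andP; split; nra.
Qed.

Definition ball_open (T : Type) (d : T -> T -> R) (A : set T) : Prop :=
  forall x, A x -> exists2 e : R, 0 < e & forall y, d x y < e -> A y.

Section BallTopology.
Variables (T : Type) (d : T -> T -> R).

Lemma ball_openT : ball_open d setT.
Proof. by move=> x _; exists 1. Qed.

Lemma ball_openI : setI_closed (ball_open d).
Proof.
move=> A B oA oB x [Ax Bx].
have [e1 e10 h1] := oA x Ax; have [e2 e20 h2] := oB x Bx.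
exists (Num.min e1 e2); first by rewrite lt_min e10 e20.
by move=> y; rewrite lt_min => /andP[/h1 ? /h2 ?].
Qed.

Lemma ball_open_bigU (I : Type) (f : I -> set T) :
  (forall i, ball_open d (f i)) -> ball_open d (\bigcup_i f i).
Proof.
move=> fo x [i _ fxi]; have [e e0 he] := fo i x fxi.
by exists e => // y /he fiy; exists i.
Qed.

End BallTopology.

(* The body of [metrizable], so that [metrizable T] unfolds to
   [exists d, is_metric d]. *)
Definition is_metric (T : topologicalType) (d : T -> T -> R) : Prop :=
    (forall x y, 0 <= d x y) /\
    (forall x y, d x y = 0 <-> x = y) /\
    (forall x y, d x y = d y x) /\
    (forall x y z, d x z <= d x y + d y z) /\
    (forall A : set T, open A <-> ball_open d A).

Section Metric.
Variables (T : topologicalType) (d : T -> T -> R) (hd : is_metric d).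

Lemma metric_ge0 x y : 0 <= d x y. Proof. by case: hd. Qed.
Lemma metric_xx x : d x x = 0. Proof. by case: hd => _ [h _]; apply/h. Qed.
Lemma metric_eq0 x y : d x y = 0 -> x = y. Proof. by case: hd => _ [h _] /h. Qed.
Lemma metric_sym x y : d x y = d y x. Proof. by case: hd => _ [_ [h _]]. Qed.
Lemma metric_triangle x y z : d x z <= d x y + d y z.
Proof. by case: hd => _ [_ [_ [h _]]]. Qed.
Lemma metric_openP (A : set T) : open A <-> ball_open d A.
Proof. by case: hd => _ [_ [_ [_ h]]]. Qed.

Lemma metric_lip x y z : `|d x z - d y z| <= d x y.
Proof.
have := metric_triangle x y z; have := metric_triangle y x z.
by rewrite (metric_sym y x) ler_norml => ? ?; apply/andP; split; lra.
Qed.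

Lemma open_metric_ball x e : open [set y | d x y < e].
Proof.
apply/metric_openP => y /= hy; exists (e - d x y); first lra.
by move=> z hz; have := metric_triangle x y z; lra.
Qed.

Lemma subspace_metric (A : set T) :
  is_metric (fun a b : set_type A => d (\val a) (\val b)).
Proof.
split; first by move=> *; exact: metric_ge0.
split; first by move=> a b; split=> [/metric_eq0/val_inj | ->]; rewrite ?metric_xx.
split; first by move=> *; exact: metric_sym.
split; first by move=> *; exact: metric_triangle.
move=> S; split.
  by case=> O /metric_openP oO <- a /oO[e e0 he]; exists e => // b /he.
move=> oS; pose O := [set z | exists a : set_type A, exists2 e, 0 < e &
   (forall b, d (\val a) (\val b) < e -> S b) /\ d (\val a) z < e].
exists O.
  apply/metric_openP => z [a [e e0 [ha hz]]]; exists (e - d (\val a) z); first lra.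
  move=> y hy; exists a; exists e => //; split => //.
  by have := metric_triangle (\val a) z y; lra.
apply/seteqP; split => b /=; first by move=> [a [e _ [ha /ha]]].
move=> Sb; have [e e0 he] := oS b Sb.
by exists b, e; rewrite ?metric_xx.
Qed.

End Metric.

Lemma continuous_metricP (X Y : topologicalType) (dX : X -> X -> R) (dY : Y -> Y -> R)
    (hX : is_metric dX) (hY : is_metric dY) (f : X -> Y) :
  continuous f <-> forall x e, 0 < e ->
    exists2 del, 0 < del & forall y, dX x y < del -> dY (f x) (f y) < e.
Proof.
split=> [fc x e e0 | fc].
  have /(metric_openP hX) := (continuousP _).1 fc _ (open_metric_ball hY (f x) e).
  by apply; rewrite /= metric_xx.
apply/continuousP => B /(metric_openP hY) oB; apply/(metric_openP hX) => x /oB[e e0 he].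
by have [del del0 hdel] := fc x e e0; exists del => // y /hdel/he.
Qed.

Definition profile (U : topologicalType) (V : set U) (d : U -> U -> R) (x : U)
    (o : option (set_type V)) : R :=
  if o is Some v then 1 + Num.min (d x (\val v)) 1 else 1.
Arguments profile {U} V d x o.

(* Allowing the value 1 at [None] only for profiles is what makes the profiles
   closed. *)
Definition hull_point (U : topologicalType) (V : set U) (d : U -> U -> R)
    (f : option (set_type V) -> R) : Prop :=
  (forall o, 1 <= f o <= 2) /\
  (1 < f None \/ exists v : set_type V, f = profile V d (\val v)).

Record hull (U : topologicalType) (V : set U) (d : U -> U -> R) := Hull {
  hull_fun :> option (set_type V) -> R;
  hull_funP : hull_point d hull_fun }.

HB.instance Definition _ (U : topologicalType) (V : set U) (d : U -> U -> R) :=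
  gen_eqMixin (hull V d).
HB.instance Definition _ (U : topologicalType) (V : set U) (d : U -> U -> R) :=
  gen_choiceMixin (hull V d).

Section HullDistance.
Variables (U : topologicalType) (V : set U) (d : U -> U -> R).
Implicit Types f g h : hull V d.

Definition hull_dist f g : R := sup (range (fun o => `|f o - g o|)).

Lemma hull_fun_bound f o : 1 <= f o <= 2.
Proof. exact: (hull_funP f).1. Qed.

Lemma hull_fun_dist_le1 f g o : `|f o - g o| <= 1.
Proof.
have /andP[? ?] := hull_fun_bound f o; have /andP[? ?] := hull_fun_bound g o.
by rewrite ler_norml; apply/andP; split; lra.
Qed.

Lemma le_hull_dist f g o : `|f o - g o| <= hull_dist f g.
Proof. exact: le_sup_range (hull_fun_dist_le1 f g) o. Qed.

Lemma hull_dist_le f g c : (forall o, `|f o - g o| <= c) -> hull_dist f g <= c.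
Proof. exact: sup_range_le None. Qed.

Lemma eq_hull f g : f =1 g -> f = g.
Proof.
case: f => f fP; case: g => g gP /= /funext fg; subst g.
by congr Hull; exact: Prop_irrelevance.
Qed.

Lemma hull_dist_ge0 f g : 0 <= hull_dist f g.
Proof. exact: le_trans (normr_ge0 _) (le_hull_dist f g None). Qed.

Lemma hull_dist_xx f : hull_dist f f = 0.
Proof.
apply/eqP; rewrite eq_le hull_dist_ge0 andbT.
by apply: hull_dist_le => o; rewrite subrr normr0.
Qed.

Lemma hull_dist_eq0 f g : hull_dist f g = 0 -> f = g.
Proof.
move=> fg0; apply: eq_hull => o; apply/eqP; rewrite -subr_eq0 -normr_le0 -fg0.
exact: le_hull_dist.
Qed.

Lemma hull_dist_sym f g : hull_dist f g = hull_dist g f.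
Proof.
by apply/eqP; rewrite eq_le; apply/andP; split; apply: hull_dist_le => o;
  rewrite distrC le_hull_dist.
Qed.

Lemma hull_dist_triangle f g h : hull_dist f h <= hull_dist f g + hull_dist g h.
Proof.
apply: hull_dist_le => o; apply: le_trans (ler_distD (g o) (f o) (h o)) _.
by apply: lerD; exact: le_hull_dist.
Qed.

End HullDistance.

HB.instance Definition _ (U : topologicalType) (V : set U) (d : U -> U -> R) :=
  isOpenTopological.Build (hull V d) (ball_openT (@hull_dist U V d))
    (@ball_openI _ (@hull_dist U V d)) (@ball_open_bigU _ (@hull_dist U V d)).

Section HullTopology.
Variables (U : topologicalType) (V : set U) (d : U -> U -> R).

Lemma hull_metric : is_metric (@hull_dist U V d).
Proof.
split; first exact: hull_dist_ge0.
split; first by move=> f g; split=> [/hull_dist_eq0 | ->]; rewrite ?hull_dist_xx.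
split; first exact: hull_dist_sym.
by split; [exact: hull_dist_triangle | move=> A].
Qed.

Lemma hull_metrizable : metrizable (hull V d).
Proof. by exists (@hull_dist U V d); exact: hull_metric. Qed.

Lemma open_hull_gt1 : open [set f : hull V d | 1 < f None].
Proof.
move=> f /= f1; exists (f None - 1); first lra.
move=> g; have := le_hull_dist f g None; rewrite ler_norml => /andP[? ?]; lra.
Qed.

End HullTopology.

Section HullEmbedding.
Variables (U : topologicalType) (V : set U) (d : U -> U -> R) (hd : is_metric d).

Lemma profile_bound x o : 1 <= profile V d x o <= 2.
Proof.
case: o => [v|] /=; last by rewrite lexx ler1n.
by have /andP[? ?] := min1_bound (metric_ge0 hd x (\val v)); apply/andP; split; lra.
Qed.

Lemma profile_hull_point (v : set_type V) : hull_point d (profile V d (\val v)).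
Proof. by split; [exact: profile_bound | right; exists v]. Qed.

Definition hull_embed (v : set_type V) : hull V d := Hull (profile_hull_point v).

Lemma hull_embed_None v : hull_embed v None = 1.
Proof. by []. Qed.

Lemma hull_embedP (f : hull V d) : f None <= 1 -> exists v, f = hull_embed v.
Proof.
move=> f1; have [_ [f1'|[v fv]]] := hull_funP f; first lra.
by exists v; apply: eq_hull => o; rewrite fv.
Qed.

Lemma hull_dist_embed_le v w :
  hull_dist (hull_embed v) (hull_embed w) <= d (\val v) (\val w).
Proof.
apply: hull_dist_le => -[u|] /=; last by rewrite subrr normr0 metric_ge0.
rewrite opprD addrACA subrr add0r.
exact: le_trans (ler_dist_min1 _ _) (metric_lip hd _ _ _).
Qed.

Lemma hull_dist_embed_ge v w :
  Num.min (d (\val v) (\val w)) 1 <= hull_dist (hull_embed v) (hull_embed w).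
Proof.
have := le_hull_dist (hull_embed v) (hull_embed w) (Some w) => /=.
rewrite metric_xx // (min_l ler01) opprD addrACA subrr add0r subr0.
by rewrite ger0_norm //; have /andP[] := min1_bound (metric_ge0 hd (\val v) (\val w)).
Qed.

Lemma hull_embed_inj : injective hull_embed.
Proof.
move=> v w vw; have := hull_dist_embed_ge v w.
rewrite vw hull_dist_xx ge_min ler10 orbF => d0.
by apply/val_inj/(metric_eq0 hd)/le_anti; rewrite d0 metric_ge0.
Qed.

Lemma hull_embed_continuous : continuous hull_embed.
Proof.
apply/(continuous_metricP (subspace_metric hd V) (@hull_metric U V d)) => v e e0.
by exists e => // w; exact: le_lt_trans (hull_dist_embed_le v w).
Qed.

End HullEmbedding.

Section HullExtension.
Variables (U : topologicalType) (V : set U) (d : U -> U -> R).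
Variables (Z : topologicalType) (rho : Z -> Z -> R) (hrho : is_metric rho).
Variables (A : set Z) (A_closed : closed A) (g : set_type A -> hull V d).
Hypothesis g_cont : continuous g.
Variable a0 : set_type A.

Definition setdist (z : Z) : R := inf (range (fun a : set_type A => rho z (\val a))).

Lemma setdist_ge0 z : 0 <= setdist z.
Proof. by apply: (le_inf_range a0) => a; exact: metric_ge0. Qed.

Lemma setdist_le z (a : set_type A) : setdist z <= rho z (\val a).
Proof. exact: inf_range_le (fun a : set_type A => metric_ge0 hrho _ _) a. Qed.

Lemma setdist_lip z w : `|setdist z - setdist w| <= rho z w.
Proof.
by apply: (@inf_range_lip _ _ _ 0 _ a0) => a; rewrite ?metric_ge0 ?metric_lip.
Qed.

Lemma setdist_eq0 z : A z -> setdist z = 0.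
Proof.
move=> Az; apply/le_anti; rewrite setdist_ge0 andbT.
by have := setdist_le z (exist _ z (mem_set Az)); rewrite /= metric_xx.
Qed.

Lemma setdist_gt0 z : ~ A z -> 0 < setdist z.
Proof.
move=> nAz; have [e e0 he] := (metric_openP hrho _).1 (closed_openC A_closed) z nAz.
apply: lt_le_trans e0 _; apply: (le_inf_range a0) => a.
by rewrite leNgt; apply/negP => /he; apply; exact: set_valP.
Qed.

Definition dugundji_weight z (a : set_type A) : R :=
  Num.min (rho z (\val a)) (2 * setdist z) / setdist z.

Lemma dugundji_weight_ge0 z a : 0 <= dugundji_weight z a.
Proof.
by rewrite divr_ge0 ?setdist_ge0 // le_min metric_ge0 // mulr_ge0 ?setdist_ge0.
Qed.

Section AwayFromA.
Variables (z : Z) (z_pos : 0 < setdist z).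

Lemma dugundji_weight_bound a : 1 <= dugundji_weight z a <= 2.
Proof.
have za := setdist_le z a.
rewrite /dugundji_weight ler_pdivlMr // ler_pdivrMr // mul1r.
by rewrite le_min ge_min za lexx orbT andbT ler_pMl // ler1n.
Qed.

Lemma dugundji_weight_far a :
  2 * setdist z <= rho z (\val a) -> dugundji_weight z a = 2.
Proof. by move=> far; rewrite /dugundji_weight (min_r far) mulfK // gt_eqF. Qed.

Lemma dugundji_weight_le a : dugundji_weight z a <= rho z (\val a) / setdist z.
Proof. by rewrite /dugundji_weight ler_pM2r ?invr_gt0 // ge_min lexx. Qed.

End AwayFromA.

(* The subtracted 1 compensates the weight, close to 1, of the nearest points
   of [A]. *)
Definition dugundji_core z o : R :=
  Num.min 2 (inf (range (fun a => g a o + dugundji_weight z a)) - 1).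

Lemma dugundji_core_family_ge1 z o a : 1 <= g a o + dugundji_weight z a.
Proof.
by have /andP[? ?] := hull_fun_bound (g a) o; have := dugundji_weight_ge0 z a; lra.
Qed.

Lemma dugundji_core_bound z o : 0 < setdist z -> 1 <= dugundji_core z o <= 2.
Proof.
move=> z_pos; have : 2 <= inf (range (fun a => g a o + dugundji_weight z a)).
  apply: (le_inf_range a0) => a; have /andP[? ?] := hull_fun_bound (g a) o.
  by have /andP[? ?] := dugundji_weight_bound z_pos a; lra.
by rewrite /dugundji_core le_min ge_min lexx /= => ?; apply/andP; split; lra.
Qed.

(* Raising the extra coordinate above 1 keeps the value in the hull whatever
   [dugundji_core z] is. *)
Definition dugundji_off z o : R :=
  if o is Some _ then dugundji_core z o
  else Num.max (dugundji_core z None) (1 + Num.min (setdist z) 1).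

Lemma dugundji_off_hull_point z : 0 < setdist z -> hull_point d (dugundji_off z).
Proof.
move=> z_pos; have m_pos : 0 < Num.min (setdist z) 1 by rewrite lt_min z_pos ltr01.
split; last by left; rewrite /= lt_max; apply/orP; right; lra.
case=> [v|] /=; first exact: dugundji_core_bound.
have /andP[? ?] := dugundji_core_bound None z_pos.
have /andP[? ?] := min1_bound (setdist_ge0 z).
by rewrite le_max ge_max; apply/andP; split; [apply/orP; left | apply/andP; split; lra].
Qed.

Definition dugundji_ext z : hull V d :=
  match pselect (A z) with
  | left Az => g (exist _ z (mem_set Az))
  | right nAz => Hull (dugundji_off_hull_point (setdist_gt0 nAz))
  end.

Lemma dugundji_ext_in z (Az : A z) : dugundji_ext z = g (exist _ z (mem_set Az)).
Proof. by rewrite /dugundji_ext; case: pselect => // Az'; congr g; exact: val_inj. Qed.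

Lemma dugundji_ext_val a : dugundji_ext (\val a) = g a.
Proof. by rewrite (dugundji_ext_in (set_valP a)); congr g; exact: val_inj. Qed.

Lemma dugundji_ext_out z : ~ A z -> dugundji_ext z =1 dugundji_off z.
Proof. by rewrite /dugundji_ext; case: pselect. Qed.

Lemma dugundji_core_near_A (az : set_type A) r eta : 0 < eta -> eta <= 1 ->
    (forall b, rho (\val az) (\val b) < r -> hull_dist (g az) (g b) < eta) ->
  forall w, ~ A w -> rho (\val az) w < r / 4 ->
  forall o, `|dugundji_core w o - g az o| <= 2 * eta.
Proof.
move=> eta0 eta1 g_near w nAw wz o; set z := \val az in g_near wz.
have w_pos := setdist_gt0 nAw.
have dw : setdist w <= rho z w by rewrite metric_sym //; exact: setdist_le.
have le_core : dugundji_core w o <= g az o + 2 * eta.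
  (* [a'] almost realises the distance from [w] to [A]: its weight is below
     [1 + eta]. *)
  have [a' wa'] := inf_range_adherent (fun a => metric_ge0 hrho w (\val a)) a0
    (mulr_gt0 eta0 w_pos).
  have za' : rho z (\val a') < r.
    have := metric_triangle hrho z w (\val a'); nra.
  have := le_hull_dist (g az) (g a') o; rewrite ler_norml => /andP[ga' _].
  have := inf_range_le (dugundji_core_family_ge1 w o) a'.
  have : dugundji_weight w a' < 1 + eta.
    by apply: le_lt_trans (dugundji_weight_le w_pos a') _; rewrite ltr_pdivrMr //; lra.
  have := g_near a' za'; rewrite /dugundji_core ge_min => ? ? ?.
  by apply/orP; right; lra.
have ge_core : g az o - eta <= dugundji_core w o.
  rewrite /dugundji_core le_min; apply/andP; split.
    by have /andP[? ?] := hull_fun_bound (g az) o; lra.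
  suff : g az o - eta + 1 <= inf (range (fun a => g a o + dugundji_weight w a)) by lra.
  (* Points of [A] near [z] have values near [g az], the far ones weight 2. *)
  apply: (le_inf_range a0) => b; have [zb|zb] := ltP (rho z (\val b)) r.
    have := g_near b zb; have := le_hull_dist (g az) (g b) o; rewrite ler_norml.
    by move=> /andP[? ?] ?; have /andP[? ?] := dugundji_weight_bound w_pos b; lra.
  rewrite dugundji_weight_far //; last first.
    by have := metric_triangle hrho z w (\val b); lra.
  have /andP[? ?] := hull_fun_bound (g az) o.
  by have /andP[? ?] := hull_fun_bound (g b) o; lra.
by rewrite ler_norml; apply/andP; split; lra.
Qed.

Lemma dugundji_ext_near_A (az : set_type A) r eta : 0 < eta -> eta <= 1 ->
    (forall b, rho (\val az) (\val b) < r -> hull_dist (g az) (g b) < eta) ->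
  forall w, rho (\val az) w < Num.min (r / 4) eta ->
  hull_dist (g az) (dugundji_ext w) <= 2 * eta.
Proof.
move=> eta0 eta1 g_near w; rewrite lt_min => /andP[wr weta].
have [Aw|nAw] := pselect (A w).
  have wr' : rho (\val az) w < r by have := metric_ge0 hrho (\val az) w; lra.
  rewrite (dugundji_ext_in Aw).
  by apply/ltW/(lt_le_trans (g_near (exist _ w (mem_set Aw)) wr')); lra.
have core := dugundji_core_near_A eta0 eta1 g_near nAw wr.
apply: hull_dist_le => o; rewrite (dugundji_ext_out nAw).
case: o => [v|] /=; first by rewrite distrC; exact: core.
have dw : setdist w <= rho (\val az) w.
  by rewrite metric_sym //; exact: setdist_le.
have m_le : Num.min (setdist w) 1 <= eta by rewrite ge_min; apply/orP; left; lra.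
have m_ge0 : 0 <= Num.min (setdist w) 1 by rewrite le_min setdist_ge0 ler01.
have := core None; rewrite ler_norml => /andP[? ?].
have /andP[? ?] := hull_fun_bound (g az) None.
rewrite ler_norml.
by have [?|?] := leP (dugundji_core w None) (1 + Num.min (setdist w) 1);
  apply/andP; split; lra.
Qed.

Lemma dugundji_core_lip z w o : 0 < setdist z -> 0 < setdist w ->
  `|dugundji_core z o - dugundji_core w o| <= 4 * rho z w / setdist z.
Proof.
move=> z_pos w_pos; rewrite /dugundji_core; apply: ler_dist_min.
  by rewrite subrr normr0 divr_ge0 ?setdist_ge0 // mulr_ge0 ?ler0n ?metric_ge0.
rewrite opprD addrACA subrr addr0.
apply: (inf_range_lip a0 (dugundji_core_family_ge1 z o) (dugundji_core_family_ge1 w o)).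
move=> a.
rewrite opprD addrACA subrr add0r; apply: ler_dist_min_ratio => //.
- exact: metric_ge0.
- exact: metric_lip.
- exact: setdist_lip.
Qed.

Lemma dugundji_ext_dist_off_A z w : ~ A z -> ~ A w ->
  hull_dist (dugundji_ext z) (dugundji_ext w) <= 4 * rho z w / setdist z + rho z w.
Proof.
move=> nAz nAw; have z_pos := setdist_gt0 nAz; have w_pos := setdist_gt0 nAw.
have core o := dugundji_core_lip o z_pos w_pos.
have zw0 := metric_ge0 hrho z w.
have q0 : 0 <= 4 * rho z w / setdist z.
  by rewrite divr_ge0 ?setdist_ge0 // mulr_ge0 ?ler0n.
apply: hull_dist_le => o; rewrite (dugundji_ext_out nAz) (dugundji_ext_out nAw).
case: o => [v|] /=; first by apply: le_trans (core _) _; lra.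
apply: ler_dist_max; first by apply: le_trans (core _) _; lra.
rewrite opprD addrACA subrr add0r; apply: le_trans (ler_dist_min1 _ _) _.
by apply: le_trans (setdist_lip z w) _; lra.
Qed.

Lemma dugundji_ext_continuous : continuous dugundji_ext.
Proof.
apply/(continuous_metricP hrho (@hull_metric U V d)) => z e e0.
have [Az|nAz] := pselect (A z).
  pose eta := Num.min (e / 4) 1.
  have eta0 : 0 < eta by rewrite lt_min ltr01 andbT; lra.
  have eta1 : eta <= 1 by rewrite ge_min lexx orbT.
  have eta_e4 : eta <= e / 4 by rewrite ge_min lexx.
  have eta_e : 2 * eta < e by lra.
  have [r r0 g_near] :=
    (continuous_metricP (subspace_metric hrho A) (hull_metric V d) g).1
      g_cont (exist _ z (mem_set Az)) eta eta0.
  exists (Num.min (r / 4) eta); first by rewrite lt_min eta0 andbT; lra.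
  move=> w /(dugundji_ext_near_A eta0 eta1 g_near) near; rewrite (dugundji_ext_in Az).
  exact: le_lt_trans near eta_e.
have z_pos := setdist_gt0 nAz.
exists (Num.min (setdist z / 2) (Num.min (e * setdist z / 8) (e / 2))).
  by rewrite !lt_min !divr_gt0 ?mulr_gt0.
move=> w; rewrite !lt_min => /andP[zw1 /andP[zw2 zw3]].
have nAw : ~ A w.
  move=> /setdist_eq0 w0; have := setdist_lip z w; rewrite w0 subr0 ger0_norm; lra.
apply: le_lt_trans (dugundji_ext_dist_off_A nAz nAw) _.
suff : 4 * rho z w / setdist z < e / 2 by lra.
by rewrite ltr_pdivrMr //; lra.
Qed.

End HullExtension.

Definition absolute_extensor (X : topologicalType) : Prop :=
  forall Z : topologicalType, metrizable Z ->
  forall A : set Z, closed A -> forall g : set_type A -> X, continuous g ->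
  exists G : Z -> X, continuous G /\ forall a : set_type A, G (\val a) = g a.

Lemma hull_absolute_extensor (U : topologicalType) (V : set U) (d : U -> U -> R) :
  absolute_extensor (hull V d).
Proof.
move=> Z [rho hrho] A A_closed g g_cont.
have [[a0 _]|A0] := pselect (exists a : set_type A, True).
  exists (dugundji_ext hrho A_closed g a0).
  by split; [exact: dugundji_ext_continuous | exact: dugundji_ext_val].
have two : hull_point d (fun _ : option (set_type V) => 2).
  by split; [move=> o; apply/andP; split | left]; lra.
exists (fun=> Hull two); split; first exact: cst_continuous.
by move=> a; case: A0; exists a.
Qed.

Lemma AE_L_of_soft (L Y X : topologicalType) (p : Y -> X) :
  absolute_extensor X -> continuous p -> L_soft L p -> AE_L L Y.
Proof.
move=> X_AE p_cont p_soft Z mZ eZ A A_closed g g_cont.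
have [|G [G_cont GA]] := X_AE Z mZ A A_closed (p \o g).
  by move=> a; apply: continuous_comp; [exact: g_cont | exact: p_cont].
have [gb [gb_cont [gbA _]]] :=
  p_soft Z mZ eZ A A_closed G g G_cont g_cont (fun a => esym (GA a)).
by exists gb.
Qed.

Lemma L_soft_pullback (L Y X W : topologicalType) (p : Y -> X) (j : W -> X)
    (B : set Y) (q : set_type B -> W) :
  L_soft L p -> continuous j -> injective j ->
  (forall y w, p y = j w -> B y) -> (forall b, p (\val b) = j (q b)) -> L_soft L q.
Proof.
move=> p_soft j_cont j_inj jB pq Z mZ eZ A A_closed h g h_cont g_cont gh.
have [|||gb [gb_cont [gbA gbp]]] := p_soft Z mZ eZ A A_closed (j \o h) (\val \o g).
- by move=> z; apply: continuous_comp; [exact: h_cont | exact: j_cont].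
- by move=> a; apply: continuous_comp; [exact: g_cont | exact: initial_continuous].
- by move=> a /=; rewrite pq gh.
have gbB z : B (gb z) by apply: (jB _ (h z)); rewrite gbp.
exists (fun z => exist _ (gb z) (mem_set (gbB z))); split.
  exact: continuous_comp_initial.
split; first by move=> a; apply: val_inj; rewrite /= gbA.
by move=> z; apply: j_inj; rewrite -pq gbp.
Qed.

Section HullPullback.
Variables (U : topologicalType) (V : set U) (d : U -> U -> R) (hd : is_metric d).
Variables (Y : topologicalType) (p : Y -> hull V d) (p_cont : continuous p).

Definition profile_preimage : set Y := ~` (p @^-1` [set f | 1 < f None]).

Lemma closed_profile_preimage : closed profile_preimage.
Proof. exact/open_closedC/(continuousP _).1/open_hull_gt1. Qed.

Lemma profile_preimageP (y : set_type profile_preimage) :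
  exists v, p (\val y) = hull_embed hd v.
Proof. by apply: hull_embedP; rewrite leNgt; apply/negP; exact: set_valP y. Qed.

Definition p_restr (y : set_type profile_preimage) : set_type V :=
  projT1 (cid (profile_preimageP y)).

Lemma p_restrE y : p (\val y) = hull_embed hd (p_restr y).
Proof. by rewrite /p_restr; case: cid. Qed.

Lemma p_restr_continuous (dY : Y -> Y -> R) (hY : is_metric dY) : continuous p_restr.
Proof.
apply/(continuous_metricP (subspace_metric hY _) (subspace_metric hd V)) => y e e0.
have e1 : 0 < Num.min e 1 by rewrite lt_min e0 ltr01.
have [del del0 p_near] :=
  (continuous_metricP hY (hull_metric V d) p).1 p_cont (\val y) (Num.min e 1) e1.
exists del => // b /p_near; rewrite !p_restrE => near.
have := le_lt_trans (hull_dist_embed_ge hd _ _) near.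
by rewrite ltNge; apply: contraNT; rewrite -leNgt => ?; exact: le_min2.
Qed.

Lemma p_restr_surjective :
  (forall f, exists y, p y = f) -> forall v, exists y, p_restr y = v.
Proof.
move=> p_onto v; have [y yv] := p_onto (hull_embed hd v).
have y_pre : profile_preimage y by rewrite /profile_preimage /= yv hull_embed_None ltxx.
exists (exist _ y (mem_set y_pre)); apply: (hull_embed_inj (hd := hd)).
by rewrite -p_restrE.
Qed.

Lemma p_restr_soft (L : topologicalType) : L_soft L p -> L_soft L p_restr.
Proof.
move=> p_soft; apply: (L_soft_pullback p_soft (hull_embed_continuous (hd := hd))
  (hull_embed_inj (hd := hd))).
  by move=> y v yv; rewrite /profile_preimage /= yv hull_embed_None ltxx.
exact: p_restrE.
Qed.

End HullPullback.

Unset Implicit Arguments.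

Theorem lemma3p9 (L : topologicalType) :
  is_CW_complex L -> soft_map_property L ->
  forall (U : topologicalType) (V : set U),
    metrizable U -> L_connected L V -> L_extension L V.
Proof.
move=> _ L_soft_maps U V [d hd] V_conn.
have [Y [p [mY [eY [p_cont [p_onto p_soft]]]]]] := L_soft_maps _ (hull_metrizable V d).
have [dY hY] := mY.
have [q [q_cont qE]] := V_conn Y mY eY _ (closed_profile_preimage p_cont) _
  (p_restr_continuous p_cont hY).
exists Y, (profile_preimage p), q; split => //; split.
  by apply: (AE_L_of_soft _ p_cont p_soft); exact: hull_absolute_extensor.
split => //; exists (p_restr hd (p := p)); split; first by move=> y; rewrite qE.
by split; [exact: p_restr_surjective | exact: p_restr_soft].
Qed.
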